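(* Let $R$ be a Dedekind domain and $I$ a non-principal ideal of $R$ such that $I\cong I^{-1}$ as $R$-modules. Let $A=M_2(R)$. Then ${}_A\mathrm{Hom}_R(A,I)\cong{}_AA$ as left $A$-modules.
   Context: The left $A$-module structure on $\mathrm{Hom}_R(A,I)$ is $(af)(x)=f(xa)$. *)

From HB Require Import structures.
From mathcomp Require Import all_boot all_order all_algebra.
From mathcomp Require Export fraction.
Set Implicit Arguments. Unset Strict Implicit. Unset Printing Implicit Defensive.
Import GRing.Theory.
Local Open Scope ring_scope.

Definition tofracR (R : idomainType) : R -> {fraction R} := @FracField.tofrac R.

Definition is_ideal (R : idomainType) (I : R -> Prop) : Prop :=
  I 0 /\ (forall x y, I x -> I y -> I (x + y)) /\ (forall r x, I x -> I (r * x)).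

Definition principal_ideal (R : idomainType) (I : R -> Prop) : Prop :=
  exists a : R, forall x, I x <-> exists r, x = r * a.

Definition fin_gen_ideal (R : idomainType) (I : R -> Prop) : Prop :=
  exists s : seq R, forall x,
    I x <-> exists c : 'I_(size s) -> R, x = \sum_(i < size s) c i * s`_i.

Definition noetherian (R : idomainType) : Prop :=
  forall I : R -> Prop, is_ideal I -> fin_gen_ideal I.

Definition prime_ideal (R : idomainType) (P : R -> Prop) : Prop :=
  is_ideal P /\ ~ P 1 /\ (forall a b, P (a * b) -> P a \/ P b).

Definition maximal_ideal (R : idomainType) (M : R -> Prop) : Prop :=
  is_ideal M /\ ~ M 1 /\
  (forall J : R -> Prop, is_ideal J -> (forall x, M x -> J x) ->
     (forall x, J x -> M x) \/ J 1).

Definition dim_le1 (R : idomainType) : Prop :=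
  forall P : R -> Prop, prime_ideal P -> (exists x, P x /\ x <> 0) -> maximal_ideal P.

Definition integrally_closed (R : idomainType) : Prop :=
  forall (x : {fraction R}) (p : {poly R}),
    p \is monic -> root (map_poly (@tofracR R) p) x -> exists r : R, x = tofracR r.

Definition dedekind_domain (R : idomainType) : Prop :=
  noetherian R /\ integrally_closed R /\ dim_le1 R.

Definition inv_ideal (R : idomainType) (I : R -> Prop) : {fraction R} -> Prop :=
  fun x => forall i, I i -> exists r : R, x * tofracR i = tofracR r.

Definition iso_ideal_inv (R : idomainType) (I : R -> Prop) : Prop :=
  exists f : R -> {fraction R},
    (forall i, I i -> inv_ideal I (f i)) /\
    (forall i j, I i -> I j -> f (i + j) = f i + f j) /\
    (forall r i, I i -> f (r * i) = tofracR r * f i) /\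
    (forall i j, I i -> I j -> f i = f j -> i = j) /\
    (forall y, inv_ideal I y -> exists i, I i /\ f i = y).

Definition is_homRI (R : idomainType) (I : R -> Prop) (f : 'M[R]_2 -> R) : Prop :=
  (forall x, I (f x)) /\ (forall r x y, f (r *: x + y) = r * f x + f y).

Definition hom_act (R : idomainType) (a : 'M[R]_2) (f : 'M[R]_2 -> R) : 'M[R]_2 -> R :=
  fun x => f (x *m a).

Definition hom_iso_regular (R : idomainType) (I : R -> Prop) : Prop :=
  exists Psi : 'M[R]_2 -> ('M[R]_2 -> R),
    (forall a, is_homRI I (Psi a)) /\
    (forall a b x, Psi (a + b) x = Psi a x + Psi b x) /\
    (forall a b x, Psi (b *m a) x = hom_act b (Psi a) x) /\
    (forall a b, (forall x, Psi a x = Psi b x) -> a = b) /\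
    (forall f, is_homRI I f -> exists a, forall x, Psi a x = f x).

(* The trace pairing identifies Hom_R(M_2(R), I), as a left M_2(R)-module, with
   M_2(I) acted on by left multiplication (G <-> tr(_ G)).  So it suffices to find
   M in M_2(I) whose inverse over Frac R lies in M_2(I^-1): then A |-> A M maps
   M_2(R) onto M_2(I).  Since I ~ I^-1 means I^-1 = c I, such an M exists as soon
   as y a + z b = 1 for some a, b in I and y, z in I^-1.  To find them, fix a <> 0
   in I; the ideal I I^-1 lies in no maximal ideal Q (an element of Q^-1 outside R
   would stabilise (I^-1)^-1 = I, contradicting integral closedness), and prime
   avoidance over the finitely many maximal ideals containing a yields b in I with
   b I^-1 in none of them, so that a I^-1 + b I^-1 contains 1. *)

From HB Require Import structures.
From mathcomp Require Import all_boot all_order all_algebra.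
From mathcomp Require Import ring.
From Stdlib Require Import Classical IndefiniteDescription.
From Stdlib Require List.

Set Implicit Arguments. Unset Strict Implicit. Unset Printing Implicit Defensive.
Import GRing.Theory.
Local Open Scope ring_scope.

HB.instance Definition _ (R : idomainType) :=
  GRing.RMorphism.copy (@tofracR R) (@FracField.tofrac R).

Local Notation F := (@tofracR _).

Section Ideals.
Variable R : idomainType.
Implicit Types (X Y P Q : R -> Prop) (L : seq (R -> Prop)).

Definition incl X Y := forall x, X x -> Y x.
Definition nonzero X := exists x, X x /\ x <> 0.
Definition multiples (a : R) x := exists r, x = r * a.
Definition adjoin X (a : R) x := exists m r, X m /\ x = m + r * a.
Definition nonzero_prime P := prime_ideal P /\ nonzero P.

Section IdealClosure.
Variable X : R -> Prop.
Hypothesis idX : is_ideal X.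

Lemma ideal0 : X 0. Proof. by case: idX. Qed.
Lemma idealD x y : X x -> X y -> X (x + y). Proof. by case: idX => _ [XD _]; apply: XD. Qed.
Lemma idealMl r x : X x -> X (r * x). Proof. by case: idX => _ [_ XM]; apply: XM. Qed.
Lemma idealMr r x : X x -> X (x * r). Proof. by rewrite mulrC; apply: idealMl. Qed.
Lemma idealN x : X x -> X (- x). Proof. by rewrite -mulN1r; apply: idealMl. Qed.

Lemma idealDr x y : X y -> X (x + y) -> X x.
Proof. by move=> Xy Xxy; rewrite -(addrK y x); apply: idealD (idealN Xy). Qed.

Lemma ideal_sum n (c : 'I_n -> R) : (forall i, X (c i)) -> X (\sum_i c i).
Proof. by move=> Xc; apply: big_ind => //; [apply: ideal0 | apply: idealD]. Qed.

End IdealClosure.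

Lemma fin_gen_mem X (g : seq R) :
    (forall x, X x <-> exists c : 'I_(size g) -> R, x = \sum_(i < size g) c i * g`_i) ->
  forall i : 'I_(size g), X g`_i.
Proof.
move=> Xg i; apply/Xg; exists (fun j => (j == i)%:R).
by rewrite (bigD1 i) //= eqxx mul1r big1 ?addr0 // => j /negbTE ->; rewrite mul0r.
Qed.

Lemma multiples_ideal a : is_ideal (multiples a).
Proof.
split; first by exists 0; rewrite mul0r.
split; first by move=> _ _ [r ->] [s ->]; exists (r + s); rewrite mulrDl.
by move=> s _ [r ->]; exists (s * r); rewrite mulrA.
Qed.

Lemma multiples_self a : multiples a a.
Proof. by exists 1; rewrite mul1r. Qed.

Lemma adjoin_ideal X a : is_ideal X -> is_ideal (adjoin X a).
Proof.
move=> idX; split; first by exists 0, 0; rewrite mul0r addr0; split=> //; apply: (ideal0 idX).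
split=> [_ _ [m [r [Xm ->]]] [m' [r' [Xm' ->]]] | s _ [m [r [Xm ->]]]].
  by exists (m + m'), (r + r'); split; [apply: (idealD idX) | ring].
by exists (s * m), (s * r); split; [apply: (idealMl idX) | ring].
Qed.

Lemma incl_adjoin X a : incl X (adjoin X a).
Proof. by move=> x Xx; exists x, 0; rewrite mul0r addr0. Qed.

Lemma adjoin_self X a : is_ideal X -> adjoin X a a.
Proof. by move=> idX; exists 0, 1; rewrite add0r mul1r; split=> //; apply: (ideal0 idX). Qed.

Lemma not_incl X Y : ~ incl X Y -> exists x, X x /\ ~ Y x.
Proof.
by move=> XY; apply: NNPP => nx; apply: XY => x Xx; apply: NNPP => nYx; apply: nx; exists x.
Qed.

Lemma maximal_prime P : maximal_ideal P -> prime_ideal P.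
Proof.
move=> [idP [nP1 maxP]]; do 2 split=> //; move=> a b Pab.
case: (classic (P a)) => [|nPa]; [by left | right].
have [Pa | [m [r [Pm Em]]]] := maxP _ (adjoin_ideal a idP) (@incl_adjoin P a).
  by case: nPa; apply: Pa; apply: adjoin_self.
have -> : b = b * m + r * (a * b) by rewrite -[b in LHS]mulr1 Em; ring.
by apply: (idealD idP); apply: (idealMl idP).
Qed.

Lemma incl_maximal P X :
  maximal_ideal P -> is_ideal X -> ~ X 1 -> incl P X -> incl X P.
Proof. by move=> [_ [_ maxP]] idX nX1 /(maxP _ idX) []. Qed.

Lemma nonprincipal_nonzero X : is_ideal X -> ~ principal_ideal X -> nonzero X.
Proof.
move=> idX nprX; apply: NNPP => X0; apply: nprX; exists 0 => x.
split=> [Xx | [r ->]]; last by rewrite mulr0; apply: ideal0.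
by exists 0; rewrite mulr0; apply: NNPP => x_neq0; apply: X0; exists x.
Qed.

(* The products q_1 * ... * q_n with q_k in the k-th ideal of L: an ideal contains
   all of them iff it contains the ideal product of L. *)
Fixpoint prod_of L x : Prop :=
  if L is Q :: L' then exists q y, Q q /\ prod_of L' y /\ x = q * y else x = 1.

Lemma prod_of_cat L1 L2 x :
  prod_of (L1 ++ L2) x <-> exists x1 x2, prod_of L1 x1 /\ prod_of L2 x2 /\ x = x1 * x2.
Proof.
elim: L1 x => [|Q L1 IH] x /=.
  by split=> [Lx | [_ [x2 [-> [Lx ->]]]]]; [exists 1, x; rewrite mul1r | rewrite mul1r].
split=> [[q [y [Qq [/IH [x1 [x2 [L1x1 [L2x2 ->]]]] ->]]]] | ].
  by exists (q * x1), x2; split; [exists q, x1 | split=> //; rewrite mulrA].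
move=> [_ [x2 [[q [y [Qq [L1y ->]]]] [L2x2 ->]]]].
by exists q, (y * x2); split=> //; split; [apply/IH; exists y, x2 | rewrite mulrA].
Qed.

Lemma prime_contains_prod P L : prime_ideal P -> incl (prod_of L) P ->
  exists L1 Q L2, L = L1 ++ Q :: L2 /\ incl Q P.
Proof.
move=> [_ [nP1 primeP]]; elim: L => [|Q L IH] PL; first by case: nP1; apply: PL.
case: (classic (incl Q P)) => [QP | /not_incl [q [Qq nPq]]]; first by exists [::], Q, L.
have [|L1 [Q' [L2 [-> Q'P]]]] := IH; last by exists (Q :: L1), Q', L2.
by move=> y Ly; have /primeP [] : P (q * y) by apply: PL; exists q, y.
Qed.

Lemma prime_avoid_prod P L : prime_ideal P ->
    List.Forall (fun Q => is_ideal Q /\ ~ incl Q P) L ->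
  exists t, ~ P t /\ List.Forall (fun Q => Q t) L.
Proof.
move=> [_ [nP1 primeP]]; elim=> [|Q L' [idQ /not_incl [q [Qq nPq]]] L'P [t [nPt L't]]].
  by exists 1.
exists (q * t); split; first by case/primeP.
constructor; first exact: (idealMr idQ).
by apply: List.Forall_impl (List.Forall_and L'P L't) => Q' [[idQ' _] Q't]; apply: idealMl.
Qed.

Definition inR (z : {fraction R}) := exists r, z = F r.

Lemma tofracR_inj : injective (@tofracR R).
Proof. by move=> x y /eqP; rewrite tofrac_eq => /eqP. Qed.

Lemma inRD y z : inR y -> inR z -> inR (y + z).
Proof. by move=> [r ->] [s ->]; exists (r + s); rewrite rmorphD. Qed.

Lemma inR_sum n (y : 'I_n -> {fraction R}) : (forall i, inR (y i)) -> inR (\sum_i y i).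
Proof. by move=> Ry; apply: big_ind => //; [exists 0; rewrite rmorph0 | apply: inRD]. Qed.

Lemma inv_ideal0 X : inv_ideal X 0.
Proof. by move=> i _; exists 0; rewrite mul0r rmorph0. Qed.

Lemma inv_ideal1 X : inv_ideal X 1.
Proof. by move=> i _; exists i; rewrite mul1r. Qed.

Lemma inv_idealD X y z : inv_ideal X y -> inv_ideal X z -> inv_ideal X (y + z).
Proof. by move=> Xy Xz i Xi; rewrite mulrDl; apply: inRD; [apply: Xy | apply: Xz]. Qed.

Lemma inv_idealZ X r y : inv_ideal X y -> inv_ideal X (F r * y).
Proof. by move=> Xy i /Xy [s Es]; exists (r * s); rewrite -mulrA Es rmorphM. Qed.

Section Dedekind.
Hypotheses (noethR : noetherian R) (intR : integrally_closed R) (dimR : dim_le1 R).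

Lemma noetherian_chain (s : nat -> R -> Prop) :
    (forall n, is_ideal (s n)) -> (forall n, incl (s n) (s n.+1)) ->
  exists N, incl (s N.+1) (s N).
Proof.
move=> ids sS.
have smono m n : (m <= n)%N -> incl (s m) (s n).
  by move=> /subnK <-; elim: (n - m)%N => [|k IH] x // /IH /sS.
pose U x := exists n, s n x.
have idU : is_ideal U.
  split; first by exists 0%N; apply: ideal0.
  split=> [x y [m sx] [n sy] | r x [n sx]]; last by exists n; apply: idealMl.
  exists (maxn m n); apply: (idealD (ids _)).
    by apply: smono sx; rewrite leq_maxl.
  by apply: smono sy; rewrite leq_maxr.
have [g Ug] := noethR idU.
have /fin_all_exists [N sN] := fin_gen_mem Ug.
exists (\max_i N i)%N => x sx; have /Ug [c ->] : U x by exists (\max_i N i).+1%N.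
by apply: ideal_sum => // i; apply: idealMl => //; apply: smono (sN i); apply: leq_bigmax.
Qed.

Lemma noetherian_maximal (Fam : (R -> Prop) -> Prop) X0 : is_ideal X0 -> Fam X0 ->
  exists X, [/\ is_ideal X, Fam X &
    forall Y, is_ideal Y -> Fam Y -> incl X Y -> incl Y X].
Proof.
move=> idX0 FX0; apply: NNPP => noMax.
have grow X : exists Y, is_ideal X -> Fam X ->
    [/\ is_ideal Y, Fam Y, incl X Y & ~ incl Y X].
  case: (classic (is_ideal X /\ Fam X)) => [[idX FX] | nX]; last by exists X => idX FX; case: nX.
  apply: NNPP => noY; apply: noMax; exists X; split=> // Y idY FY XY.
  by apply: NNPP => nYX; apply: noY; exists Y.
have [f fP] := functional_choice _ grow.
pose s n := iter n f X0.
have sP n : is_ideal (s n) /\ Fam (s n).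
  by elim: n => [|n [ids Fs]] //=; have [] := fP _ ids Fs.
have sS n : incl (s n) (s n.+1) by have [ids Fs] := sP n; have [] := fP _ ids Fs.
have [N sN] := noetherian_chain (fun n => (sP n).1) sS.
by have [ids Fs] := sP N; have [_ _ _] := fP _ ids Fs.
Qed.

Lemma exists_maximal_sup X : is_ideal X -> ~ X 1 -> exists M, maximal_ideal M /\ incl X M.
Proof.
move=> idX nX1.
have [M [idM [XM nM1] maxM]] :=
  noetherian_maximal (Fam := fun Y => incl X Y /\ ~ Y 1) idX (conj (fun x Xx => Xx) nX1).
exists M; do 3 split=> //; move=> J idJ MJ.
case: (classic (J 1)) => [|nJ1]; [by right | left].
by apply: maxM => //; split=> // x /XM /MJ.
Qed.

Lemma nonzero_contains_prime_prod X : is_ideal X -> nonzero X ->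
  exists L, List.Forall nonzero_prime L /\ incl (prod_of L) X.
Proof.
move=> idX nzX; apply: NNPP => noL.
have [M [idM [nzM noLM] maxM]] := noetherian_maximal
  (Fam := fun Y => nonzero Y /\ ~ exists L, List.Forall nonzero_prime L /\ incl (prod_of L) Y)
  idX (conj nzX noL).
have nM1 : ~ M 1 by move=> M1; apply: noLM; exists [::]; split=> // _ ->.
have [a [b [Mab [nMa nMb]]]] : exists a b, M (a * b) /\ ~ M a /\ ~ M b.
  apply: NNPP => nab; apply: noLM; exists [:: M]; split.
    constructor=> //; do 2 split=> //; split=> // a b Mab.
    by apply: NNPP => /not_or_and [nMa nMb]; apply: nab; exists a, b.
  by move=> _ [q [_ [Mq [-> ->]]]]; rewrite mulr1.
have adjoin_prod c : ~ M c ->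
    exists L, List.Forall nonzero_prime L /\ incl (prod_of L) (adjoin M c).
  move=> nMc; apply: NNPP => noLc; apply: nMc.
  have [x [Mx x0]] := nzM.
  apply: (maxM _ (adjoin_ideal c idM) _ (@incl_adjoin M c) c (adjoin_self c idM)).
  by split=> //; exists x; split=> //; apply: incl_adjoin.
have [[La [nzLa aLa]] [Lb [nzLb bLb]]] := (adjoin_prod a nMa, adjoin_prod b nMb).
apply: noLM; exists (La ++ Lb); split; first exact/List.Forall_app.
move=> _ /prod_of_cat [_ [_ [/aLa [m [r [Mm ->]]] [/bLb [m' [r' [Mm' ->]]] ->]]]].
have -> : (m + r * a) * (m' + r' * b) = (m' + r' * b) * m + (r * a) * m' + (r * r') * (a * b).
  by ring.
by apply: (idealD idM); [apply: (idealD idM) |]; apply: (idealMl idM).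
Qed.

Lemma stable_integral X z : is_ideal X -> nonzero X ->
  (forall x, X x -> exists y, X y /\ z * F x = F y) -> inR z.
Proof.
move=> idX [x0 [Xx0 x0_neq0]] zX.
have [g Xg] := noethR idX.
have zg (k : 'I_(size g)) : exists c : {ffun 'I_(size g) -> R}, z * F g`_k = F (\sum_i c i * g`_i).
  have [y [/Xg [c ->] ->]] := zX _ (fin_gen_mem Xg k).
  by exists [ffun i => c i]; congr F; apply: eq_bigr => i _; rewrite ffunE.
have /fin_all_exists [C zC] := zg.
(* Determinant trick: z is an eigenvalue of the matrix A over R. *)
pose A := \matrix_(i, k) C k i : 'M[R]_(size g).
pose v : 'rV_(size g) := \row_k F g`_k.
have [k gk_neq0] : exists k : 'I_(size g), g`_k != 0.
  apply: NNPP => g0; apply: x0_neq0; have [c ->] := (Xg x0).1 Xx0.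
  by apply: big1 => i _; case: (eqVneq g`_i 0) => [-> | gi]; [rewrite mulr0 | case: g0; exists i].
have v_neq0 : v != 0 by apply/eqP => /rowP/(_ k); rewrite !mxE; apply/eqP; rewrite tofrac_eq0.
have vA : v *m map_mx F A = z *: v.
  apply/rowP => j; rewrite !mxE zC rmorph_sum.
  by apply: eq_bigr => i _; rewrite !mxE rmorphM mulrC.
apply: (@intR z (char_poly A)); first exact: char_poly_monic.
rewrite map_char_poly -eigenvalue_root_char.
by apply/eigenvalueP; exists v.
Qed.

Lemma maximal_inv_nonintegral P :
  maximal_ideal P -> nonzero P -> exists z, inv_ideal P z /\ ~ inR z.
Proof.
move=> maxP [a [Pa a_neq0]].
have [L [primeL aL]] := nonzero_contains_prime_prod (multiples_ideal a)
  (ex_intro _ a (conj (multiples_self a) a_neq0)).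
have aP : incl (multiples a) P by move=> _ [r ->]; apply: (idealMl maxP.1).
have Fa_neq0 : F a != 0 by rewrite tofrac_eq0; apply/eqP.
(* Take L of minimal length; dropping the factor Q above P leaves a product not
   inside aR, and any x in it gives z = x / a. *)
have [n] := ubnP (size L); elim: n => // n IH in L primeL aL *; rewrite ltnS => sizeL.
have [L1 [Q [L2 [defL QP]]]] :=
  prime_contains_prod (maximal_prime maxP) (fun x Lx => aP x (aL x Lx)).
move: primeL; rewrite defL.
move=> /List.Forall_app [primeL1 /List.Forall_cons_iff [[primeQ nzQ] primeL2]].
have PQ : incl P Q by apply: incl_maximal (dimR primeQ nzQ) maxP.1 maxP.2.1 QP.
case: (classic (incl (prod_of (L1 ++ L2)) (multiples a))) => [aL12 | /not_incl [x [L12x nax]]].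
  apply: (IH (L1 ++ L2)) aL12 _; first exact/List.Forall_app.
  by move: sizeL; rewrite defL !size_cat /= addnS.
exists (F x / F a); split=> [p Pp | [r Er]]; last first.
  by apply: nax; exists r; apply: tofracR_inj; rewrite rmorphM /= -Er divfK.
have [r Er] : multiples a (p * x).
  apply/aL; rewrite defL; move/prod_of_cat: L12x => [x1 [x2 [L1x1 [L2x2 ->]]]].
  apply/prod_of_cat; exists x1, (p * x2); split=> //; split; last by ring.
  by exists p, x2; split; [apply: PQ | split].
by exists r; rewrite mulrAC -rmorphM /= [x * p]mulrC Er rmorphM /= mulfK.
Qed.

Section SelfDualIdeal.
Variable I : R -> Prop.
Hypotheses (idI : is_ideal I) (nzI : nonzero I) (isoI : iso_ideal_inv I).

Lemma inv_ideal_scaled :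
  exists2 c, c != 0 & forall y, inv_ideal I y <-> exists2 i, I i & y = c * F i.
Proof.
have [i0 [Ii0 i0_neq0]] := nzI; have [f [fI [fD [fZ [f_inj f_onto]]]]] := isoI.
have Fi0_neq0 : F i0 != 0 by rewrite tofrac_eq0; apply/eqP.
have f0 : f 0 = 0 by rewrite -(mul0r 0) fZ ?rmorph0 ?mul0r //; apply: ideal0.
have fE i : I i -> f i = f i0 / F i0 * F i.
  by move=> Ii; rewrite mulrAC [f i0 * _]mulrC -fZ // [i * i0]mulrC fZ // mulrC mulKf.
exists (f i0 / F i0) => [|y].
  rewrite mulf_neq0 ?invr_eq0 //; apply/eqP => fi0.
  by apply: i0_neq0; apply: f_inj => //; [apply: ideal0 | rewrite fi0 f0].
split=> [/f_onto [i [Ii <-]] | [i Ii ->]]; first by exists i; rewrite -?fE.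
by rewrite -fE //; apply: fI.
Qed.

Lemma inv_inv_ideal w : (forall y, inv_ideal I y -> inR (w * y)) -> exists2 i, I i & w = F i.
Proof.
have [c c_neq0 invIE] := inv_ideal_scaled => wR.
have /invIE [i Ii wcE] : inv_ideal I (w * c).
  by move=> j Ij; rewrite -mulrA; apply/wR/invIE; exists j.
by exists i => //; apply: (mulIf c_neq0); rewrite wcE mulrC.
Qed.

Definition inv_multiples b r := exists2 y, inv_ideal I y & y * F b = F r.

Lemma inv_multiples_not_incl Q : maximal_ideal Q -> nonzero Q ->
  exists2 i, I i & ~ incl (inv_multiples i) Q.
Proof.
move=> maxQ nzQ; apply: NNPP => IQ.
have [z [zQ zR]] := maximal_inv_nonintegral maxQ nzQ; apply/zR/(stable_integral idI nzI) => i Ii.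
have [j Ij ->] : exists2 j, I j & z * F i = F j.
  apply: inv_inv_ideal => y Iy; have [r Er] := Iy i Ii.
  have Qr : Q r by apply: NNPP => nQr; apply: IQ; exists i => // /(_ r) iQ; apply/nQr/iQ; exists y.
  by rewrite -mulrA [F i * y]mulrC Er; apply: zQ.
by exists j.
Qed.

Lemma inv_multiples_shift Q b i t : is_ideal Q -> I i -> Q t ->
  ~ incl (inv_multiples b) Q -> ~ incl (inv_multiples (b + t * i)) Q.
Proof.
move=> idQ Ii Qt /not_incl [r [[y Iy Er] nQr]] bQ; have [s Es] := Iy i Ii.
apply: nQr; apply: (idealDr idQ (y := t * s)); first exact: idealMr.
by apply: bQ; exists y; rewrite // rmorphD rmorphM /= mulrDr Er mulrCA Es -rmorphM -rmorphD.
Qed.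

Lemma exists_local_generator L : List.Forall nonzero_prime L ->
  exists2 b, I b & List.Forall (fun Q => ~ incl (inv_multiples b) Q) L.
Proof.
elim=> [|Q L' [primeQ nzQ] primeL [b Ib bL]]; first by exists 0; [apply: ideal0 |].
case: (classic (incl (inv_multiples b) Q)) => [bQ | nbQ]; last by exists b; [| constructor].
have maxQ := dimR primeQ nzQ.
have [t [nQt Lt]] : exists t, ~ Q t /\ List.Forall (fun Q' => Q' t) L'.
  apply: prime_avoid_prod primeQ _.
  apply: List.Forall_impl (List.Forall_and primeL bL) => Q' [[primeQ' nzQ'] nbQ'].
  split=> [|Q'Q]; first exact: primeQ'.1.
  by apply: nbQ' => r /bQ; apply: (incl_maximal (dimR primeQ' nzQ') maxQ.1 maxQ.2.1 Q'Q).
(* Replace b by b + t i: t lies in every ideal of L but not in Q. *)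
have [i Ii /not_incl [r0 [[y0 Iy0 Er0] nQr0]]] := inv_multiples_not_incl maxQ nzQ.
exists (b + t * i); first by apply: (idealD idI) => //; apply: idealMl.
constructor.
  move=> bQ'; have [r1 Er1] := Iy0 b Ib.
  have Qr1 : Q r1 by apply: bQ; exists y0.
  have /(idealDr maxQ.1 Qr1) : Q (t * r0 + r1).
    by apply: bQ'; exists y0; rewrite // !rmorphD !rmorphM /= mulrDr Er1 mulrCA Er0 addrC.
  by case/(maximal_prime maxQ).2.2.
apply: List.Forall_impl (List.Forall_and (List.Forall_and primeL bL) Lt).
by move=> Q' [[[primeQ' _] nbQ'] Q't]; apply: inv_multiples_shift primeQ'.1 Ii Q't nbQ'.
Qed.

Lemma unimodular_pair : exists a b y z,
  [/\ I a, I b, inv_ideal I y, inv_ideal I z & y * F a + z * F b = 1].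
Proof.
have [a [Ia a_neq0]] := nzI.
have [L [primeL aL]] := nonzero_contains_prime_prod (multiples_ideal a)
  (ex_intro _ a (conj (multiples_self a) a_neq0)).
have [b Ib bL] := exists_local_generator primeL.
apply: NNPP => noPair.
pose J x := exists y z, [/\ inv_ideal I y, inv_ideal I z & F x = y * F a + z * F b].
have idJ : is_ideal J.
  split; first by exists 0, 0; split; rewrite ?rmorph0 ?mul0r ?addr0 //; apply: inv_ideal0.
  split=> [x x' [y [z [Iy Iz Ex]]] [y' [z' [Iy' Iz' Ex']]] | r x [y [z [Iy Iz Ex]]]].
    by exists (y + y'), (z + z'); split; rewrite ?rmorphD /= ?Ex ?Ex'; [apply: inv_idealD.. | ring].
  by exists (F r * y), (F r * z); split; rewrite ?rmorphM /= ?Ex; [apply: inv_idealZ.. | ring].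
have nJ1 : ~ J 1.
  by move=> [y [z [Iy Iz E1]]]; apply: noPair; exists a, b, y, z; rewrite -E1 rmorph1.
(* A maximal ideal containing J contains a, hence some Q of L, and equals it. *)
have [M [maxM JM]] := exists_maximal_sup idJ nJ1.
have aM : incl (multiples a) M.
  move=> _ [r ->]; apply: JM; exists (F r), 0; split; rewrite ?mul0r ?addr0 ?rmorphM //.
    by rewrite -[F r]mulr1; apply/inv_idealZ/inv_ideal1.
  exact: inv_ideal0.
have [L1 [Q [L2 [defL QM]]]] :=
  prime_contains_prod (maximal_prime maxM) (fun x Lx => aM x (aL x Lx)).
rewrite defL in primeL bL; have [primeQ nzQ] : nonzero_prime Q := List.Forall_elt _ _ _ primeL.
have MQ := incl_maximal (dimR primeQ nzQ) maxM.1 maxM.2.1 QM.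
apply: (List.Forall_elt _ _ _ bL) => r [y Iy Er]; apply/MQ/JM.
by exists 0, y; split; rewrite ?mul0r ?add0r //; apply: inv_ideal0.
Qed.
End SelfDualIdeal.
End Dedekind.
End Ideals.

Section TraceForm.
Variables (R : pzRingType) (n : nat).

Lemma mxtrace_delta_mul (i j : 'I_n) (A : 'M[R]_n) : \tr (delta_mx i j *m A) = A j i.
Proof.
rewrite /mxtrace (bigD1 i) //= big1 ?addr0 => [|k /negbTE kNi].
  rewrite mxE (bigD1 j) //= big1 ?addr0 => [|l /negbTE lNj]; first by rewrite mxE !eqxx mul1r.
  by rewrite mxE lNj andbF mul0r.
by rewrite mxE big1 // => l _; rewrite mxE kNi mul0r.
Qed.

Lemma linear_mxtrace_form (f : 'M[R]_n -> R) :
    (forall r x y, f (r *: x + y) = r * f x + f y) ->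
  forall x, f x = \tr (x *m \matrix_(i, j) f (delta_mx j i)).
Proof.
move=> flin x.
have fD y z : f (y + z) = f y + f z by rewrite -[y in LHS]scale1r flin mul1r.
have f0 : f 0 = 0 by apply/eqP; have := fD 0 0; rewrite addr0 => /esym/eqP; rewrite -subr_eq0 addrK.
have fZ r y : f (r *: y) = r * f y by rewrite -[r *: y]addr0 flin f0 addr0.
rewrite [in LHS](matrix_sum_delta x) (big_morph f fD f0) [in RHS](matrix_sum_delta x).
rewrite mulmx_suml raddf_sum /=; apply: eq_bigr => i _.
rewrite (big_morph f fD f0) mulmx_suml raddf_sum /=; apply: eq_bigr => j _.
by rewrite fZ -scalemxAl mxtraceZ mxtrace_delta_mul mxE.
Qed.
End TraceForm.

Definition mx2 (T : Type) (a b c d : T) : 'M[T]_2 :=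
  \matrix_(i, j) if i == ord0 then if j == ord0 then a else b else if j == ord0 then c else d.

Lemma mx2_forall (T : Type) (P : T -> Prop) a b c d :
  P a -> P b -> P c -> P d -> forall i j, P (mx2 a b c d i j).
Proof. by move=> Pa Pb Pc Pd i j; rewrite mxE; case: ifP; case: ifP. Qed.

Lemma map_mx2 (T U : Type) (f : T -> U) a b c d :
  map_mx f (mx2 a b c d) = mx2 (f a) (f b) (f c) (f d).
Proof. by apply/matrixP => i j; rewrite !mxE; case: ifP; case: ifP. Qed.

Lemma mulmx2 (R : pzSemiRingType) (a b c d a' b' c' d' : R) :
  mx2 a b c d *m mx2 a' b' c' d' =
  mx2 (a * a' + b * c') (a * b' + b * d') (c * a' + d * c') (c * b' + d * d').
Proof.
apply/matrixP => i j; rewrite !mxE big_ord_recr big_ord1 /= !mxE.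
by case: i => [[|[|//]] ?]; case: j => [[|[|//]] ?].
Qed.

Lemma mx2_1 (R : pzSemiRingType) : mx2 1 0 0 1 = 1%:M :> 'M[R]_2.
Proof. by apply/matrixP => i j; rewrite !mxE; case: i => [[|[|//]] ?]; case: j => [[|[|//]] ?]. Qed.

Section DualPair.
Variable R : idomainType.

Lemma map_tofracR_mx_inj m n : injective (map_mx F : 'M[R]_(m, n) -> _).
Proof.
by move=> A B /matrixP AB; apply/matrixP => i j; apply: tofracR_inj; have := AB i j; rewrite !mxE.
Qed.

Lemma map_tofracR_mx_onto m n (B : 'M[{fraction R}]_(m, n)) :
  (forall i j, inR (B i j)) -> exists A, map_mx F A = B.
Proof.
move=> RB; have /fin_all_exists [g gE] : forall ij : 'I_m * 'I_n, exists r, B ij.1 ij.2 = F r.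
  by move=> [i j]; apply: RB.
by exists (\matrix_(i, j) g (i, j)); apply/matrixP => i j; rewrite !mxE -gE.
Qed.

Lemma hom_iso_regular_of_dual_pair (I : R -> Prop) (M : 'M[R]_2) (N : 'M[{fraction R}]_2) :
    is_ideal I -> (forall i j, I (M i j)) -> (forall i j, inv_ideal I (N i j)) ->
    map_mx F M *m N = 1%:M ->
  hom_iso_regular I.
Proof.
move=> idI IM IN MN; have NM : N *m map_mx F M = 1%:M := mulmx1C MN.
(* Psi A := tr (_ A M); a form tr (_ G) is Psi (G N), and G N has entries in R
   because those of G lie in I and those of N in I^-1. *)
exists (fun A x => \tr (x *m A *m M)); split.
  move=> A; split=> [x | r x y]; last by rewrite !mulmxDl -!scalemxAl mxtraceD mxtraceZ.
  rewrite /mxtrace; apply: (ideal_sum idI) => k; rewrite mxE; apply: (ideal_sum idI) => l.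
  exact: idealMl.
split; first by move=> A B x; rewrite mulmxDr mulmxDl mxtraceD.
split; first by move=> A B x; rewrite /hom_act !mulmxA.
split=> [A B AB | f [fI flin]].
  have ABM0 : (A - B) *m M = 0.
    apply/matrixP => i j; rewrite -(mxtrace_delta_mul j i ((A - B) *m M)) mxE.
    by rewrite mulmxBl mulmxBr !mulmxA raddfB /= AB subrr.
  apply/eqP; rewrite -subr_eq0; apply/eqP; apply: map_tofracR_mx_inj.
  by rewrite map_mx0 -[LHS]mulmx1 -MN mulmxA -map_mxM ABM0 map_mx0 mul0mx.
pose G := \matrix_(i, j) f (delta_mx j i).
have [A AE] : exists A, map_mx F A = map_mx F G *m N.
  apply: map_tofracR_mx_onto => i j; rewrite mxE; apply: inR_sum => k.
  by rewrite !mxE mulrC; apply: IN; apply: fI.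
have AMG : A *m M = G by apply: map_tofracR_mx_inj; rewrite map_mxM AE -mulmxA NM mulmx1.
by exists A => x; rewrite -mulmxA AMG -linear_mxtrace_form.
Qed.
End DualPair.

Theorem proposition2p2 (R : idomainType) (I : R -> Prop) :
  dedekind_domain R -> is_ideal I -> ~ principal_ideal I -> iso_ideal_inv I ->
  hom_iso_regular I.
Proof.
move=> [noethR [intR dimR]] idI nprI isoI.
have nzI := nonprincipal_nonzero idI nprI.
have [c _ invIE] := inv_ideal_scaled idI nzI isoI.
have [a [b [_ [_ [Ia Ib /invIE [i1 Ii1 ->] /invIE [i2 Ii2 ->] E]]]]] :=
  unimodular_pair noethR intR dimR idI nzI isoI.
(* det M = a i1 + b i2 = c^-1, and N = c adj M. *)
apply: (@hom_iso_regular_of_dual_pair _ _ (mx2 a b (- i2) i1)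
  (mx2 (c * F i1) (- (c * F b)) (c * F i2) (c * F a))) => //.
- by apply: mx2_forall => //; apply: idealN.
- apply: mx2_forall; apply/invIE; [exists i1 | exists (- b) | exists i2 | exists a] => //.
    exact: idealN.
  by rewrite rmorphN /= mulrN.
- by rewrite map_mx2 mulmx2 -mx2_1; congr mx2; rewrite ?rmorphN /= -?E; ring.
Qed.
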